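(* Consider SEMO on \textsc{LOTZ} in which the parent is chosen from the current population by some parent selection mechanism. The expected time for SEMO to reach the Pareto front (i.e. to have a Pareto-optimal point in its population) is $O(n^2)$. Assume that afterwards, in every iteration in which the population does not cover the whole Pareto front, the probability of selecting a good individual is at least $p_{\mathrm{good}}$. Then the expected time for SEMO to reach a population covering the whole Pareto front of \textsc{LOTZ} is $O(n^2/p_{\mathrm{good}})$.
   Context: Search space $\{0,1\}^n$; objectives maximised. $\textsc{LOTZ}(x)=(\mathrm{LO}(x),\mathrm{TZ}(x))$, $\mathrm{LO}$ = number of leading ones, $\mathrm{TZ}$ = number of trailing zeros. Dominance: $y$ dominates $x$ if $f_i(y)\ge f_i(x)$ for all $i$, strictly for some $i$; weakly dominates if $\ge$ in all. Pareto set $X^*=\{1^i0^{n-i}:0\le i\le n\}$, front $F^*=f(X^* )$. SEMO: start with uniform random $s$, $P=\{s\}$. Each iteration: choose a parent $s\in P$ by the parent selection mechanism; create $s'$ by flipping one uniformly random bit; if $s'$ is not dominated by any member of $P$, add it and remove all members weakly dominated by $s'$. Time = number of iterations. Good: w.r.t. $P$, $x\in P\cap X^*$ is good if some Hamming neighbour $y$ of $x$ satisfies $y\in X^*$ and $f(y)\notin f(P)$. *)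

From HB Require Import structures.
From mathcomp Require Import all_boot all_order all_algebra.
From mathcomp Require Import all_classical all_reals all_analysis.
Set Implicit Arguments. Unset Strict Implicit. Unset Printing Implicit Defensive.
Import Order.TTheory GRing.Theory Num.Theory.

Local Open Scope ring_scope.
Section SEMO.
Variable n : nat.

(* search space {0,1}^n ; bit i is x i, position 1..n <-> i = 0..n-1 *)
Definition bs := {ffun 'I_n -> bool}.

Definition bits (x : bs) : seq bool := [seq x i | i <- enum 'I_n].

Definition LO (x : bs) : nat := find negb (bits x).
Definition TZ (x : bs) : nat := find id (rev (bits x)).
Definition LOTZ (x : bs) : nat * nat := (LO x, TZ x).

Definition dominates (u v : nat * nat) : bool :=
  [&& (v.1 <= u.1)%N, (v.2 <= u.2)%N & ((v.1 < u.1)%N || (v.2 < u.2)%N)].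
Definition wdominates (u v : nat * nat) : bool := ((v.1 <= u.1)%N && (v.2 <= u.2)%N).

Definition pareto_opt (x : bs) : bool :=
  [forall y : bs, ~~ dominates (LOTZ y) (LOTZ x)].

Definition flip (x : bs) (i : 'I_n) : bs :=
  [ffun j => if j == i then ~~ x j else x j].

Definition semo_step (P : {set bs}) (s : bs) (i : 'I_n) : {set bs} :=
  let s' := flip s i in
  if [exists y in P, dominates (LOTZ y) (LOTZ s')] then P
  else s' |: [set y in P | ~~ wdominates (LOTZ s') (LOTZ y)].

(* A history = initial individual and the list of (parent, flipped bit)
   choices made so far; the population is determined by it. *)
Definition pop_after (s0 : bs) (cs : seq (bs * 'I_n)) : {set bs} :=
  foldl (fun P c => semo_step P c.1 c.2) [set s0] cs.

Definition reached_front (P : {set bs}) : bool := [exists x in P, pareto_opt x].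
Definition covers_front (P : {set bs}) : bool :=
  [forall y : bs, pareto_opt y ==> [exists x in P, LOTZ x == LOTZ y]].

(* good individuals w.r.t. P (Hamming neighbours = single bit flips) *)
Definition good (P : {set bs}) (x : bs) : bool :=
  [&& x \in P, pareto_opt x &
      [exists i : 'I_n, pareto_opt (flip x i) &&
         ~~ [exists z in P, LOTZ z == LOTZ (flip x i)]]].

Variable R : realType.

(* A parent selection mechanism: given the history (s0, cs) it gives the
   probability sel s0 cs x of choosing x as parent; it may depend on the
   whole history. *)
Definition selection := bs -> seq (bs * 'I_n) -> bs -> R.

Definition valid_selection (sel : selection) : Prop :=
  forall s0 cs,
    [/\ forall x, 0 <= sel s0 cs x,
        forall x, x \notin pop_after s0 cs -> sel s0 cs x = 0
      & \sum_(x in pop_after s0 cs) sel s0 cs x = 1].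

Fixpoint path_prob_from (sel : selection) (s0 : bs) (pre cs : seq (bs * 'I_n)) : R :=
  match cs with
  | [::] => 1
  | c :: cs' => sel s0 pre c.1 * (n%:R)^-1 * path_prob_from sel s0 (rcons pre c) cs'
  end.

(* probability of the history (s0, cs): uniform initial point, then choices *)
Definition hist_prob (sel : selection) (s0 : bs) (cs : seq (bs * 'I_n)) : R :=
  (2 ^ n)%:R^-1 * path_prob_from sel s0 [::] cs.

(* Pr[T_E > t], T_E = number of iterations until the population satisfies E *)
Definition tail_prob (sel : selection) (E : {set bs} -> bool) (t : nat) : R :=
  \sum_(s0 : bs) \sum_(cs : t.-tuple (bs * 'I_n))
     (if [forall k : 'I_t.+1, ~~ E (pop_after s0 (take k cs))]
      then hist_prob sel s0 cs else 0).

(* E[T_E] = sum_{t >= 0} Pr[T_E > t]  (possibly +oo) *)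
Definition expected_time (sel : selection) (E : {set bs} -> bool) : \bar R :=
  (\sum_(t <oo) (tail_prob sel E t)%:E)%E.

End SEMO.

(* Before the front is reached the population is a single non-optimal point
   x, because every one-bit mutant of such an x is comparable with it; the
   parent is x itself and flipping bit LO x, which happens with probability
   1/n, strictly raises LO + TZ.  Hence n (n - max (LO + TZ)) is a potential
   that drops by at least 1 in expectation per iteration.  On the front, a good
   parent is chosen with probability at least p_good and its right bit flipped
   with probability 1/n, adding a new front point, while covered front points
   are never lost; so (n / p_good) (n + 1 - #covered) is such a potential too.
   The additive drift argument, carried out on the finite tree of histories,
   bounds each expected time by the initial value of the potential. *)

From HB Require Import structures.
From mathcomp Require Import all_boot all_order all_algebra.
From mathcomp Require Import all_classical all_reals all_analysis.
From mathcomp Require Import zify ring lra.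
Import Order.TTheory GRing.Theory Num.Theory.
Set Implicit Arguments. Unset Strict Implicit. Unset Printing Implicit Defensive.
Local Open Scope ring_scope.

Section LeadingOnesTrailingZeros.
Local Open Scope nat_scope.
Variable n : nat.
Implicit Types (x y : bs n) (i j : 'I_n).

Lemma size_bits x : size (bits x) = n.
Proof. by rewrite size_map size_enum_ord. Qed.

Lemma nth_bits x j : nth false (bits x) j = x j.
Proof. by rewrite (nth_map j) ?size_enum_ord // nth_ord_enum. Qed.

Lemma LO_le x : LO x <= n.
Proof. by have := find_size negb (bits x); rewrite size_bits. Qed.

Lemma bit_lt_LO x j : j < LO x -> x j.
Proof. by move/(before_find false); rewrite nth_bits => /negbFE. Qed.

Lemma bit_LO x j : j = LO x :> nat -> x j = false.
Proof.
move=> jE; have : has negb (bits x) by rewrite has_find size_bits -/(LO x) -jE.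
by move/(nth_find false); rewrite -/(LO x) -jE nth_bits => /negbTE.
Qed.

Lemma LO_le_bit x j : x j = false -> LO x <= j.
Proof. by move=> xj; rewrite leqNgt; apply: contraFN xj; apply: bit_lt_LO. Qed.

Lemma LO_ge x k : k <= n -> (forall j, j < k -> x j) -> k <= LO x.
Proof.
move=> kn xk; rewrite leqNgt; apply/negP => ltLk.
have ltLn : LO x < n by apply: leq_trans ltLk kn.
by have := @bit_LO x (Ordinal ltLn) erefl; rewrite xk.
Qed.

Lemma flipE x i j : flip x i j = if j == i then ~~ x j else x j.
Proof. by rewrite ffunE. Qed.

Lemma flip_id x i : flip x i i = ~~ x i.
Proof. by rewrite flipE eqxx. Qed.

Lemma flip_neq x i j : j != i -> flip x i j = x j.
Proof. by rewrite flipE => /negbTE ->. Qed.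

Lemma LO_flip_lt x i : i < LO x -> LO (flip x i) < LO x.
Proof.
move=> ltiL; apply: (leq_ltn_trans _ ltiL).
by apply: LO_le_bit; rewrite flip_id bit_lt_LO.
Qed.

Lemma LO_flip_ge x i : LO x <= i -> LO x <= LO (flip x i).
Proof.
move=> leLi; apply: LO_ge (LO_le x) _ => j ltjL.
by rewrite flip_neq ?bit_lt_LO //; apply: contraTneq ltjL => ->; rewrite -leqNgt.
Qed.

Lemma LO_flip_LO x i : i = LO x :> nat -> LO x < LO (flip x i).
Proof.
move=> iE; apply: LO_ge => [|j]; first by rewrite -iE.
rewrite ltnS leq_eqVlt => /predU1P[jE|ltjL].
  by rewrite (_ : j = i) ?flip_id ?bit_LO //; apply: val_inj; rewrite /= jE.
by rewrite flip_neq ?bit_lt_LO //; apply: contraTneq ltjL => ->; rewrite iE ltnn.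
Qed.

Lemma LO_flip_neq x i : i != LO x :> nat -> LO (flip x i) <= LO x.
Proof.
move=> neiL; have [ltLn|geLn] := ltnP (LO x) n; last exact: leq_trans (LO_le _) geLn.
apply: (@LO_le_bit _ (Ordinal ltLn)).
by rewrite flip_neq ?bit_LO //; apply: contra neiL => /eqP <-.
Qed.

(* TZ x is the LO of the reversed complement of x, so facts about TZ are
   transported from the corresponding facts about LO. *)
Definition rev_compl x : bs n := [ffun j => ~~ x (rev_ord j)].

Lemma TZ_rev_compl x : TZ x = LO (rev_compl x).
Proof.
rewrite /TZ; have -> : rev (bits x) = [seq x (rev_ord j) | j <- enum 'I_n].
  apply: (@eq_from_nth _ false); first by rewrite size_rev size_bits size_map size_enum_ord.
  move=> k; rewrite size_rev size_bits => ltkn.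
  rewrite nth_rev size_bits // (nth_map (Ordinal ltkn)) ?size_enum_ord //.
  rewrite -[n - k.+1]/(val (rev_ord (Ordinal ltkn))) nth_bits.
  by rewrite -[k]/(val (Ordinal ltkn)) nth_ord_enum.
rewrite /LO /bits !find_map; apply: eq_find => j.
by rewrite /preim /= ffunE negbK.
Qed.

Lemma rev_compl_flip x i : rev_compl (flip x i) = flip (rev_compl x) (rev_ord i).
Proof.
apply/ffunP => j; rewrite !ffunE -(inj_eq rev_ord_inj) rev_ordK.
by case: eqP.
Qed.

Lemma TZ_flip_lt x i : n <= i + TZ x -> TZ (flip x i) < TZ x.
Proof.
rewrite !TZ_rev_compl rev_compl_flip => le_n; apply: LO_flip_lt.
by rewrite /=; have := ltn_ord i; lia.
Qed.

Lemma TZ_flip_ge x i : i + TZ x < n -> TZ x <= TZ (flip x i).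
Proof.
rewrite !TZ_rev_compl rev_compl_flip => lt_n; apply: LO_flip_ge.
by rewrite /=; lia.
Qed.

Lemma TZ_flip_neq x i : (i + TZ x).+1 != n -> TZ (flip x i) <= TZ x.
Proof.
rewrite !TZ_rev_compl rev_compl_flip => ne_n; apply: LO_flip_neq.
by rewrite /=; have := ltn_ord i; lia.
Qed.

Lemma LOTZ_le x : LO x + TZ x <= n.
Proof.
rewrite leqNgt; apply/negP => gt_n.
have := LO_le x; have := LO_le (rev_compl x); rewrite -TZ_rev_compl => leTn leLn.
have ltjn : n - TZ x < n by lia.
have := @bit_lt_LO (rev_compl x) (rev_ord (Ordinal ltjn)).
by rewrite -TZ_rev_compl ffunE rev_ordK bit_lt_LO /=; lia.
Qed.

Lemma dominates_sum (u v : nat * nat) : dominates u v -> v.1 + v.2 < u.1 + u.2.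
Proof. by case/and3P => le1 le2 /orP[]; lia. Qed.

Lemma dominates_flip_LO x i : i = LO x :> nat -> LO x + TZ x < n ->
  dominates (LOTZ (flip x i)) (LOTZ x).
Proof.
move=> iE lt_n; have ltLO := LO_flip_LO iE.
have leTZ : TZ x <= TZ (flip x i) by apply: TZ_flip_ge; rewrite iE.
by rewrite /dominates /= ltLO leTZ ltnW.
Qed.

Lemma pareto_optE x : pareto_opt x = (LO x + TZ x == n).
Proof.
apply/forallP/eqP => [undominated|opt y]; last first.
  by apply: contraTN (LOTZ_le y) => /dominates_sum /=; rewrite opt -ltnNge.
apply/eqP; rewrite eqn_leq LOTZ_le /= leqNgt; apply/negP => lt_n.
have ltLn : LO x < n by lia.
by have := undominated (flip x (Ordinal ltLn)); rewrite dominates_flip_LO.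
Qed.

Lemma LOTZ_pareto_eq x y : pareto_opt x -> pareto_opt y -> LO x = LO y ->
  LOTZ x = LOTZ y.
Proof. by rewrite !pareto_optE /LOTZ => /eqP optx /eqP opty LOE; congr pair; lia. Qed.

(* A mutation left of bit LO x loses leading ones, one right of the last 1-bit
   loses trailing zeros, and one in between loses neither. *)
Lemma comparable_flip x i : LO x + TZ x < n ->
  dominates (LOTZ x) (LOTZ (flip x i)) || wdominates (LOTZ (flip x i)) (LOTZ x).
Proof.
move=> lt_n; rewrite /dominates /wdominates /=.
have [ltiL|leLi] := ltnP i (LO x).
  have ltLO := LO_flip_lt ltiL.
  have leTZ : TZ (flip x i) <= TZ x by apply: TZ_flip_neq; lia.
  by rewrite ltLO leTZ ltnW.
have [leTi|ltiT] := leqP n (i + TZ x).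
  have ltTZ := TZ_flip_lt leTi.
  have leLO : LO (flip x i) <= LO x by apply: LO_flip_neq; lia.
  by rewrite ltTZ leLO ltnW ?orbT.
by rewrite LO_flip_ge // TZ_flip_ge ?orbT.
Qed.

End LeadingOnesTrailingZeros.

Section SemoStep.
Local Open Scope nat_scope.
Variable n : nat.
Implicit Types (x y s : bs n) (P : {set bs n}) (i : 'I_n).

Lemma mem_semo_step P s i x : x \in P ->
  x \in semo_step P s i \/
  flip s i \in semo_step P s i /\ wdominates (LOTZ (flip s i)) (LOTZ x).
Proof.
move=> xP; rewrite /semo_step; case: ifP => _; first by left.
case wdom: (wdominates _ _); first by right; rewrite setU11.
by left; rewrite !inE xP wdom orbT.
Qed.

Lemma offspring_semo_step P s i :
  ~~ [exists y in P, dominates (LOTZ y) (LOTZ (flip s i))] ->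
  flip s i \in semo_step P s i.
Proof. by rewrite /semo_step => /negbTE ->; rewrite setU11. Qed.

Lemma wdominates_pareto x y : pareto_opt x -> wdominates (LOTZ y) (LOTZ x) ->
  pareto_opt y /\ LO y = LO x.
Proof.
rewrite !pareto_optE /wdominates /= => /eqP opt /andP[leLO leTZ].
by have := LOTZ_le y; split; [apply/eqP|]; lia.
Qed.

Lemma reached_front1 x : pareto_opt x -> reached_front [set x].
Proof. by move=> opt; apply/existsP; exists x; rewrite set11. Qed.

Lemma reached_front_step P s i : reached_front P -> reached_front (semo_step P s i).
Proof.
case/existsP => x /andP[xP opt]; apply/existsP.
case: (mem_semo_step s i xP) => [xP'|[sP' wdom]]; first by exists x; rewrite xP' opt.
by exists (flip s i); rewrite sP' (wdominates_pareto opt wdom).1.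
Qed.

Lemma single_front_not_covered : 0 < n ->
  exists2 x : bs n, pareto_opt x & ~~ covers_front [set x].
Proof.
move=> n_gt0; pose ones : bs n := [ffun => true].
pose zeros : bs n := [ffun => false].
have LO_ones : LO ones = n.
  by apply/eqP; rewrite eqn_leq LO_le LO_ge // => j _; rewrite ffunE.
have TZ_zeros : TZ zeros = n.
  by apply/eqP; rewrite eqn_leq TZ_rev_compl LO_le LO_ge // => j _; rewrite !ffunE.
exists ones; first by rewrite pareto_optE; have := LOTZ_le ones; lia.
have opt_zeros : pareto_opt zeros by rewrite pareto_optE; have := LOTZ_le zeros; lia.
apply/negP => /forallP /(_ zeros); rewrite opt_zeros => /existsP[y].
rewrite inE => /andP[/eqP -> /eqP [LOE _]].
by have := LOTZ_le zeros; rewrite -LOE LO_ones TZ_zeros; lia.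
Qed.

Definition max_fitness P := \max_(x in P) (LO x + TZ x).

Lemma max_fitness_le P : max_fitness P <= n.
Proof. by apply/bigmax_leqP => x _; apply: LOTZ_le. Qed.

Lemma max_fitness1 x : max_fitness [set x] = LO x + TZ x.
Proof. by rewrite /max_fitness big_set1. Qed.

Lemma max_fitness_step P s i : max_fitness P <= max_fitness (semo_step P s i).
Proof.
apply/bigmax_leqP => x xP.
case: (mem_semo_step s i xP) => [xP'|[sP' wdom]]; first exact: leq_bigmax_cond.
apply: leq_trans (leq_bigmax_cond _ sP').
by move: wdom; rewrite /wdominates /= => /andP[]; lia.
Qed.

Lemma semo_step1 x i : LO x + TZ x < n ->
  semo_step [set x] x i = [set x] \/ semo_step [set x] x i = [set flip x i].
Proof.
move=> lt_n; rewrite /semo_step.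
case/orP: (comparable_flip i lt_n) => [dom|wdom].
  by left; rewrite ifT //; apply/existsP; exists x; rewrite set11 dom.
right; rewrite ifF; last first.
  apply/negbTE/existsP => -[y /andP[/set1P -> /dominates_sum]].
  by move: wdom; rewrite /wdominates /= => /andP[]; lia.
apply/setP => y; rewrite !inE; case: eqP => [->|_] //=.
by apply/negP => /andP[/eqP ->]; rewrite wdom.
Qed.

Lemma max_fitness_step1 x i : LO x + TZ x < n ->
  LO x + TZ x + (i == LO x :> nat) <= max_fitness (semo_step [set x] x i).
Proof.
move=> lt_n; have [iE|_] := eqP; last by rewrite addn0 -max_fitness1 max_fitness_step.
have dom := dominates_flip_LO iE lt_n.
have sP : flip x i \in semo_step [set x] x i.
  apply: offspring_semo_step; apply/existsP => -[y /andP[/set1P -> dom']].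
  by have := dominates_sum dom; have := dominates_sum dom'; lia.
by apply: leq_trans (leq_bigmax_cond _ sP); rewrite addn1 (dominates_sum dom).
Qed.

Definition front_cover P : {set 'I_n.+1} :=
  [set k : 'I_n.+1 | [exists x in P, pareto_opt x && (LO x == k)]].

Lemma card_front_cover P : #|front_cover P| <= n.+1.
Proof. by have := max_card (front_cover P); rewrite card_ord. Qed.

Lemma front_cover_step P s i : front_cover P \subset front_cover (semo_step P s i).
Proof.
apply/fintype.subsetP => k; rewrite !inE => /existsP[x /and3P[xP opt /eqP xk]].
apply/existsP; case: (mem_semo_step s i xP) => [xP'|[sP' wdom]].
  by exists x; rewrite xP' opt xk eqxx.
have [opt' LOE] := wdominates_pareto opt wdom.
by exists (flip s i); rewrite sP' opt' LOE xk eqxx.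
Qed.

Definition fresh_front_point P y :=
  pareto_opt y && ~~ [exists z in P, LOTZ z == LOTZ y].

Lemma card_front_cover_step P s i :
  #|front_cover P| + fresh_front_point P (flip s i) <= #|front_cover (semo_step P s i)|.
Proof.
have [/andP[opt fresh]|_] := boolP (fresh_front_point _ _); last first.
  by rewrite addn0 subset_leq_card ?front_cover_step.
rewrite addn1; apply/proper_card/fintype.properP; split; first exact: front_cover_step.
have ltk : LO (flip s i) < n.+1 by rewrite ltnS LO_le.
exists (Ordinal ltk); rewrite inE.
  apply/existsP; exists (flip s i); rewrite opt eqxx !andbT.
  apply: offspring_semo_step; apply/existsP => -[y /andP[_ dom]].
  by move/forallP: opt => /(_ y); rewrite dom.
apply: contra fresh => /existsP[z /and3P[zP optz /eqP LOE]].
by apply/existsP; exists z; rewrite zP (LOTZ_pareto_eq optz opt LOE) eqxx.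
Qed.

End SemoStep.

Lemma big_tuple0 (V : nmodType) (T : finType) (F : 0.-tuple T -> V) :
  \sum_(cs : 0.-tuple T) F cs = F [tuple].
Proof.
rewrite (eq_bigl (pred1 [tuple])) ?big_pred1_eq // => cs /=.
by rewrite [cs]tuple0; apply/esym/eqP.
Qed.

Lemma big_tupleS (V : nmodType) (T : finType) (t : nat) (F : t.+1.-tuple T -> V) :
  \sum_(cs : t.+1.-tuple T) F cs = \sum_(c : T) \sum_(cs : t.-tuple T) F (cons_tuple c cs).
Proof.
rewrite pair_big /= (reindex (fun p : T * t.-tuple T => cons_tuple p.1 p.2)) //=.
exists (fun cs => (thead cs, behead_tuple cs)) => [[c cs] _|cs _].
  by rewrite theadE; congr pair; apply: val_inj.
by apply: val_inj; rewrite /= [in RHS](tuple_eta cs).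
Qed.

Lemma forall_ordS (t : nat) (P : nat -> bool) :
  [forall k : 'I_t.+2, P k] = P 0%N && [forall k : 'I_t.+1, P k.+1].
Proof.
apply/fintype.forallP/andP => [allP|[P0 /fintype.forallP allP] [[|k] ltk] //].
  by split; [exact: (allP ord0) | apply/fintype.forallP => k; exact: (allP (lift ord0 k))].
exact: (allP (Ordinal (ltk : (k < t.+1)%N))).
Qed.

Section Histories.
Variables (n : nat) (R : realType) (sel : selection n R).
Notation hist := (seq (bs n * 'I_n)).
Implicit Types (pre cs : hist) (c : bs n * 'I_n) (E : {set bs n} -> bool).

Definition step_prob (s0 : bs n) pre c : R := sel s0 pre c.1 / n%:R.

Lemma path_prob_from_rcons (s0 : bs n) pre cs c :
  path_prob_from sel s0 pre (rcons cs c) =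
  path_prob_from sel s0 pre cs * step_prob s0 (pre ++ cs) c.
Proof.
elim: cs pre => [|c' cs IH] pre /=; first by rewrite cats0 mul1r mulr1.
by rewrite IH cat_rcons !mulrA.
Qed.

Lemma hist_prob_rcons (s0 : bs n) cs c :
  hist_prob sel s0 (rcons cs c) = hist_prob sel s0 cs * step_prob s0 cs c.
Proof. by rewrite /hist_prob path_prob_from_rcons mulrA. Qed.

Lemma pop_after_rcons (s0 : bs n) cs c :
  pop_after s0 (rcons cs c) = semo_step (pop_after s0 cs) c.1 c.2.
Proof. by rewrite /pop_after foldl_rcons. Qed.

(* The probability, given the history [pre], that [E] fails for the current
   population and for each of the next [t] ones. *)
Definition survival E (s0 : bs n) pre t : R :=
  \sum_(cs : t.-tuple (bs n * 'I_n))
    (if [forall k : 'I_t.+1, ~~ E (pop_after s0 (pre ++ take k cs))]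
     then path_prob_from sel s0 pre cs else 0).

Lemma survival0 E (s0 : bs n) pre : survival E s0 pre 0 = (~~ E (pop_after s0 pre))%:R.
Proof.
rewrite /survival big_tuple0 /=.
have -> : [forall k : 'I_1, ~~ E (pop_after s0 (pre ++ take k [tuple]))] =
          ~~ E (pop_after s0 pre).
  apply/fintype.forallP/idP => [/(_ ord0)|notE [[|k] ltk] //=]; by rewrite cats0.
by case: (E _).
Qed.

Lemma survivalS E (s0 : bs n) pre t : survival E s0 pre t.+1 =
  if E (pop_after s0 pre) then 0
  else \sum_c step_prob s0 pre c * survival E s0 (rcons pre c) t.
Proof.
rewrite /survival big_tupleS.
under eq_bigr => c _ do under eq_bigr => cs _ do
  rewrite (forall_ordS _ (fun k => ~~ E (pop_after s0 (pre ++ take k (cons_tuple c cs)))))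
          /= cats0.
case: ifP => /= [_|_]; first by rewrite big1 // => c _; rewrite big1.
apply: eq_bigr => c _; rewrite mulr_sumr; apply: eq_bigr => cs _.
under eq_forallb => k do rewrite -cat_rcons.
by case: ifP; rewrite ?mulr0.
Qed.

Lemma tail_probE E t :
  tail_prob sel E t = \sum_s0 (2 ^ n)%:R^-1 * survival E s0 [::] t.
Proof.
apply: eq_bigr => s0 _; rewrite /survival mulr_sumr.
by apply: eq_bigr => cs _; rewrite /hist_prob; case: ifP; rewrite ?mulr0.
Qed.

End Histories.

Section AdditiveDrift.
Variables (n : nat) (R : realType) (sel : selection n R).
Hypothesis n_gt0 : (0 < n)%N.
Hypothesis sel_valid : valid_selection sel.
Notation hist := (seq (bs n * 'I_n)).
Implicit Types (pre : hist) (c : bs n * 'I_n).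
Implicit Types (E : {set bs n} -> bool) (Phi : {set bs n} -> R).

Lemma step_prob_ge0 (s0 : bs n) pre c : 0 <= step_prob sel s0 pre c.
Proof. by have [sel_ge0 _ _] := sel_valid s0 pre; rewrite mulr_ge0 // invr_ge0. Qed.

Lemma step_prob_gt0_mem (s0 : bs n) pre c :
  0 < step_prob sel s0 pre c -> c.1 \in pop_after s0 pre.
Proof.
have [_ sel_out _] := sel_valid s0 pre; apply: contraTT => /sel_out.
by rewrite /step_prob => ->; rewrite mul0r ltxx.
Qed.

Lemma sum_step_prob (s0 : bs n) pre : \sum_c step_prob sel s0 pre c = 1.
Proof.
have [_ sel_out sel_sum1] := sel_valid s0 pre.
have n_neq0 : n%:R != 0 :> R by rewrite pnatr_eq0 -lt0n.
have -> : \sum_c step_prob sel s0 pre c = \sum_x \sum_(i < n) sel s0 pre x / n%:R.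
  by rewrite pair_big.
under eq_bigr => x _ do rewrite sumr_const card_ord -[_ *+ n]mulr_natr mulfVK //.
by rewrite (bigID (mem (pop_after s0 pre))) /= [X in _ + X]big1 ?addr0 // => x /sel_out.
Qed.

Lemma hist_prob_ge0 (s0 : bs n) cs : 0 <= hist_prob sel s0 cs.
Proof.
rewrite /hist_prob mulr_ge0 ?invr_ge0 //.
elim: cs [::] => [|c cs IH] pre /=; first exact: ler01.
by rewrite mulr_ge0 // -/(step_prob sel s0 pre c) step_prob_ge0.
Qed.

Lemma drift_of_decrease (s0 : bs n) pre Phi (Phi0 : R) (D : bs n * 'I_n -> R) :
  (forall c, 0 < step_prob sel s0 pre c ->
     Phi (pop_after s0 (rcons pre c)) <= Phi0 - D c) ->
  1 <= \sum_c step_prob sel s0 pre c * D c ->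
  1 + \sum_c step_prob sel s0 pre c * Phi (pop_after s0 (rcons pre c)) <= Phi0.
Proof.
move=> decrease expected_D.
have sum_decrease : \sum_c step_prob sel s0 pre c * (Phi0 - D c) =
                    Phi0 - \sum_c step_prob sel s0 pre c * D c.
  under eq_bigr => c _ do rewrite mulrBr.
  by rewrite sumrB -mulr_suml sum_step_prob mul1r.
apply: le_trans (_ : 1 + \sum_c step_prob sel s0 pre c * (Phi0 - D c) <= Phi0).
  rewrite lerD2l; apply: ler_sum => c _.
  have [->|step_neq0] := eqVneq (step_prob sel s0 pre c) 0; first by rewrite !mul0r.
  by rewrite ler_wpM2l ?step_prob_ge0 // decrease // lt_def step_neq0 step_prob_ge0.
by rewrite sum_decrease; lra.
Qed.

Lemma survival_sum_le E (s0 : bs n) (inv : hist -> Prop) Phi :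
  (forall pre, inv pre -> 0 <= Phi (pop_after s0 pre)) ->
  (forall pre c, inv pre -> 0 < step_prob sel s0 pre c -> inv (rcons pre c)) ->
  (forall pre, inv pre -> ~~ E (pop_after s0 pre) ->
     1 + \sum_c step_prob sel s0 pre c * Phi (pop_after s0 (rcons pre c))
       <= Phi (pop_after s0 pre)) ->
  forall m pre, inv pre -> \sum_(t < m) survival sel E s0 pre t <= Phi (pop_after s0 pre).
Proof.
move=> Phi_ge0 inv_step drift; elim=> [|m IH] pre inv_pre.
  by rewrite big_ord0 Phi_ge0.
rewrite big_ord_recl survival0; under eq_bigr => t _ do rewrite survivalS.
have := drift _ inv_pre; case: (E (pop_after s0 pre)) => [_|/(_ isT) drift_pre].
  by rewrite big1 ?add0r ?Phi_ge0.
apply: le_trans drift_pre; rewrite lerD2l exchange_big /=.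
apply: ler_sum => c _; rewrite -mulr_sumr.
have [->|step_neq0] := eqVneq (step_prob sel s0 pre c) 0; first by rewrite !mul0r.
have step_gt0 : 0 < step_prob sel s0 pre c by rewrite lt_def step_neq0 step_prob_ge0.
by rewrite ler_wpM2l ?step_prob_ge0 // IH //; apply: inv_step.
Qed.

Lemma expected_time_le_potential E (M : R) (inv : bs n -> hist -> Prop) Phi :
  (forall s0, inv s0 [::]) -> (forall s0, Phi [set s0] <= M) ->
  (forall s0 pre, inv s0 pre -> 0 <= Phi (pop_after s0 pre)) ->
  (forall s0 pre c, inv s0 pre -> 0 < step_prob sel s0 pre c -> inv s0 (rcons pre c)) ->
  (forall s0 pre, inv s0 pre -> ~~ E (pop_after s0 pre) ->
     1 + \sum_c step_prob sel s0 pre c * Phi (pop_after s0 (rcons pre c))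
       <= Phi (pop_after s0 pre)) ->
  (expected_time sel E <= M%:E)%E.
Proof.
move=> inv0 Phi0_le Phi_ge0 inv_step drift.
have tail_ge0 t : 0 <= tail_prob sel E t.
  apply: sumr_ge0 => s0 _; apply: sumr_ge0 => cs _.
  by case: ifP => // _; apply: hist_prob_ge0.
have tail_ge0E t : (0 <= (tail_prob sel E t)%:E)%E by rewrite lee_fin.
apply: (lime_le (is_cvg_nneseries (fun t _ _ => tail_ge0E t))).
apply: nearW => m; rewrite sumEFin lee_fin big_mkord.
under eq_bigr => t _ do rewrite tail_probE; rewrite exchange_big /=.
have two_n_gt0 : 0 < (2 ^ n)%:R :> R by rewrite ltr0n expn_gt0.
apply: le_trans (_ : \sum_(s0 : bs n) (2 ^ n)%:R^-1 * M <= M).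
  apply: ler_sum => s0 _; rewrite -mulr_sumr ler_pM2l ?invr_gt0 //.
  apply: le_trans (Phi0_le s0).
  exact: survival_sum_le (Phi_ge0 s0) (inv_step s0) (drift s0) m [::] (inv0 s0).
rewrite sumr_const card_ffun card_bool card_ord -mulrnAr -[M *+ _]mulr_natl.
by rewrite mulKf // gt_eqF.
Qed.

End AdditiveDrift.

Section Phases.
Variables (n : nat) (R : realType) (sel : selection n R).
Hypothesis n_gt0 : (0 < n)%N.
Hypothesis sel_valid : valid_selection sel.
Notation hist := (seq (bs n * 'I_n)).
Implicit Types (x : bs n) (pre : hist) (c : bs n * 'I_n) (P Q : {set bs n}).
Implicit Types (F : {set bs n} -> R) (K : R).

Definition single_or_front P := reached_front P \/ exists x, P = [set x].

Definition feasible (s0 : bs n) pre :=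
  0 < hist_prob sel s0 pre /\ single_or_front (pop_after s0 pre).

Lemma feasible0 (s0 : bs n) : feasible s0 [::].
Proof.
split; last by right; exists s0.
by rewrite /hist_prob /= mulr1 invr_gt0 ltr0n expn_gt0.
Qed.

Lemma feasible_step (s0 : bs n) pre c :
  feasible s0 pre -> 0 < step_prob sel s0 pre c -> feasible s0 (rcons pre c).
Proof.
move=> [hist_gt0 inv] step_gt0; split; first by rewrite hist_prob_rcons mulr_gt0.
have := step_prob_gt0_mem sel_valid step_gt0; rewrite /single_or_front pop_after_rcons.
case: inv => [front _|[x ->] /set1P ->]; first by left; apply: reached_front_step.
have [opt|not_opt] := boolP (pareto_opt x).
  by left; apply/reached_front_step/reached_front1.
have lt_n : (LO x + TZ x < n)%N by rewrite ltn_neqAle LOTZ_le andbT -pareto_optE.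
by right; case: (semo_step1 c.2 lt_n) => ->; [exists x | exists (flip x c.2)].
Qed.

Lemma single_before_front (s0 : bs n) pre :
  feasible s0 pre -> ~~ reached_front (pop_after s0 pre) ->
  exists2 x, pop_after s0 pre = [set x] & (LO x + TZ x < n)%N.
Proof.
move=> [_ [front|[x Px]]] not_front; first by rewrite front in not_front.
exists x => //; rewrite ltn_neqAle LOTZ_le andbT -pareto_optE.
by apply: contra not_front; rewrite Px; apply: reached_front1.
Qed.

Lemma sel_single (s0 : bs n) pre x : pop_after s0 pre = [set x] -> sel s0 pre x = 1.
Proof. by have [_ _] := sel_valid s0 pre; move=> + Px; rewrite Px big_set1. Qed.

Definition front_potential (F : {set bs n} -> R) (K : R) P : R :=
  if reached_front P then F P else n%:R * (n%:R - (max_fitness P)%:R) + K.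

Lemma front_potential_le F K P : (forall Q, F Q <= K) ->
  front_potential F K P <= n%:R * (n%:R - (max_fitness P)%:R) + K.
Proof.
move=> F_le; rewrite /front_potential; case: ifP => // _.
apply: le_trans (F_le P) _.
by rewrite lerDr mulr_ge0 // subr_ge0 ler_nat max_fitness_le.
Qed.

Lemma front_potential_ge0 F K P :
  (forall Q, 0 <= F Q) -> 0 <= K -> 0 <= front_potential F K P.
Proof.
move=> F_ge0 K_ge0; rewrite /front_potential; case: ifP => // _.
by rewrite addr_ge0 // mulr_ge0 // subr_ge0 ler_nat max_fitness_le.
Qed.

Lemma front_potential_le_sqr F K P : (forall Q, F Q <= K) ->
  front_potential F K P <= n%:R ^+ 2 + K.
Proof.
move=> F_le; apply: le_trans (front_potential_le P F_le) _.
by rewrite lerD2r expr2 ler_wpM2l // lerBlDr lerDl.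
Qed.

Lemma drift_before_front (s0 : bs n) pre F K :
  feasible s0 pre -> ~~ reached_front (pop_after s0 pre) -> (forall Q, F Q <= K) ->
  1 + \sum_c step_prob sel s0 pre c * front_potential F K (pop_after s0 (rcons pre c))
    <= front_potential F K (pop_after s0 pre).
Proof.
move=> feas not_front F_le; have [x Px lt_n] := single_before_front feas not_front.
pose hit c := (c.2 == LO x :> nat).
apply: (drift_of_decrease n_gt0 sel_valid (D := fun c => n%:R * (hit c)%:R)).
  move=> [s i] /(step_prob_gt0_mem sel_valid); rewrite Px => /set1P /= ->.
  rewrite {2}/front_potential -Px (negbTE not_front) pop_after_rcons Px max_fitness1.
  apply: le_trans (front_potential_le _ F_le) _.
  have := max_fitness_step1 i lt_n; rewrite -(ler_nat R) natrD /hit /=.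
  have : 0 <= n%:R :> R by []; nra.
have ltLn : (LO x < n)%N by apply: leq_ltn_trans lt_n; apply: leq_addr.
rewrite (bigD1 (x, Ordinal ltLn)) //= /hit eqxx /step_prob (sel_single Px).
have n_neq0 : n%:R != 0 :> R by rewrite pnatr_eq0 -lt0n.
rewrite mul1r mulr1 mulVf // lerDl.
have [sel_ge0 _ _] := sel_valid s0 pre.
by apply: sumr_ge0 => c _; rewrite !mulr_ge0 ?invr_ge0 ?sel_ge0.
Qed.

Definition cover_potential (p : R) P : R :=
  n%:R / p * ((n.+1)%:R - #|front_cover P|%:R).

Lemma cover_potential_ge0 p P : 0 < p -> 0 <= cover_potential p P.
Proof.
move=> p_gt0; apply: mulr_ge0; first exact: divr_ge0 (ler0n _ _) (ltW p_gt0).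
by rewrite subr_ge0 ler_nat card_front_cover.
Qed.

Lemma cover_potential_le p P : 0 < p -> cover_potential p P <= n%:R / p * (n.+1)%:R.
Proof.
move=> p_gt0; rewrite ler_wpM2l ?lerBlDr ?lerDl //.
exact: divr_ge0 (ler0n _ _) (ltW p_gt0).
Qed.

Lemma drift_on_front (s0 : bs n) pre (p : R) : 0 < p ->
  p <= \sum_(x in pop_after s0 pre | good (pop_after s0 pre) x) sel s0 pre x ->
  1 + \sum_c step_prob sel s0 pre c * cover_potential p (pop_after s0 (rcons pre c))
    <= cover_potential p (pop_after s0 pre).
Proof.
move=> p_gt0 p_le; set P := pop_after s0 pre; set K := n%:R / p.
have K_ge0 : 0 <= K := divr_ge0 (ler0n _ _) (ltW p_gt0).
have [sel_ge0 _ _] := sel_valid s0 pre.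
pose fresh c := fresh_front_point P (flip c.1 c.2).
apply: (drift_of_decrease n_gt0 sel_valid (D := fun c => K * (fresh c)%:R)).
  move=> [s i] _; rewrite pop_after_rcons /cover_potential -/K /fresh /=.
  by have := card_front_cover_step P s i; rewrite -(ler_nat R) natrD; nra.
have -> : \sum_c step_prob sel s0 pre c * (K * (fresh c)%:R) =
          \sum_x \sum_(i < n) sel s0 pre x / n%:R * (K * (fresh (x, i))%:R).
  by rewrite pair_big.
have n_neq0 : n%:R != 0 :> R by rewrite pnatr_eq0 -lt0n.
apply: le_trans (_ : \sum_(x in P | good P x) sel s0 pre x * (K / n%:R) <= _).
  by rewrite -mulr_suml /K mulrAC divff // mul1r ler_pdivlMr // mul1r.
rewrite big_mkcond /=; apply: ler_sum => x _.
have term_ge0 i : 0 <= sel s0 pre x / n%:R * (K * (fresh (x, i))%:R).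
  by apply: mulr_ge0; [rewrite mulr_ge0 ?invr_ge0 | apply: mulr_ge0].
case: ifP => [/andP[_ /and3P[_ _ /existsP[i fresh_i]]]|_]; last exact: sumr_ge0.
rewrite (bigD1 i) //= -[X in X <= _]addr0 lerD ?sumr_ge0 //.
by rewrite /fresh /fresh_front_point /= fresh_i mulr1 mulrA mulrAC.
Qed.

Lemma expected_time_reached_front :
  (expected_time sel (@reached_front n) <= (n%:R ^+ 2)%:E)%E.
Proof.
rewrite -[n%:R ^+ 2]addr0.
apply: (expected_time_le_potential sel_valid (inv := feasible)
         (Phi := front_potential (fun=> 0) 0)).
- exact: feasible0.
- by move=> s0; apply: front_potential_le_sqr.
- by move=> s0 pre _; apply: front_potential_ge0.
- exact: feasible_step.
- by move=> s0 pre feas not_front; apply: drift_before_front.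
Qed.

Variable p : R.
Hypothesis good_selected : forall s0 cs, 0 < hist_prob sel s0 cs ->
  reached_front (pop_after s0 cs) -> ~~ covers_front (pop_after s0 cs) ->
  p <= \sum_(x in pop_after s0 cs | good (pop_after s0 cs) x) sel s0 cs x.

Lemma p_le1 : p <= 1.
Proof.
have [x opt not_cover] := single_front_not_covered n_gt0.
have := good_selected (feasible0 x).1 (reached_front1 opt) not_cover.
move/le_trans; apply; have [sel_ge0 _ sel_sum1] := sel_valid x [::].
rewrite -[X in _ <= X]sel_sum1 big_mkcondr ler_sum // => y _.
by case: ifP => // _; apply: sel_ge0.
Qed.

Hypothesis p_gt0 : 0 < p.

Lemma expected_time_covers_front :
  (expected_time sel (@covers_front n) <= (n%:R ^+ 2 + n%:R / p * (n.+1)%:R)%:E)%E.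
Proof.
have K_ge0 : 0 <= n%:R / p * (n.+1)%:R by rewrite mulr_ge0 // divr_ge0 // ltW.
apply: (expected_time_le_potential sel_valid (inv := feasible)
         (Phi := front_potential (cover_potential p) (n%:R / p * (n.+1)%:R))).
- exact: feasible0.
- by move=> s0; apply/front_potential_le_sqr => Q; apply: cover_potential_le.
- by move=> s0 pre _; apply: front_potential_ge0 => // Q; apply: cover_potential_ge0.
- exact: feasible_step.
move=> s0 pre feas not_cover.
have [front|not_front] := boolP (reached_front (pop_after s0 pre)); last first.
  by apply: drift_before_front => // Q; apply: cover_potential_le.
rewrite {2}/front_potential front.
under eq_bigr => c _ do
  rewrite /front_potential pop_after_rcons reached_front_step // -pop_after_rcons.
apply: drift_on_front => //; apply: good_selected => //; exact: feas.1.
Qed.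

End Phases.

Theorem lemma6 (R : realType) :
  exists C : R, 0 < C /\
  forall (n : nat) (p_good : R) (sel : selection n R),
    (0 < n)%N -> 0 < p_good ->
    valid_selection sel ->
    (forall s0 cs, 0 < hist_prob sel s0 cs ->
       reached_front (pop_after s0 cs) -> ~~ covers_front (pop_after s0 cs) ->
       p_good <= \sum_(x in pop_after s0 cs | good (pop_after s0 cs) x) sel s0 cs x) ->
    (expected_time sel (@reached_front n) <= (C * n%:R ^+ 2)%:E)%E /\
    (expected_time sel (@covers_front n) <= (C * n%:R ^+ 2 / p_good)%:E)%E.
Proof.
exists 3; split => // n p sel n_gt0 p_gt0 sel_valid good_selected.
have n_ge1 : 1 <= n%:R :> R by rewrite ler1n.
have p_inv_ge1 : 1 <= p^-1 by rewrite invf_ge1 // (p_le1 n_gt0 sel_valid good_selected).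
split.
  apply: le_trans (expected_time_reached_front n_gt0 sel_valid) _.
  by rewrite lee_fin; nra.
apply: le_trans (expected_time_covers_front n_gt0 sel_valid good_selected p_gt0) _.
rewrite lee_fin -natr1; set N := n%:R; set q := p^-1 in p_inv_ge1 *.
have : 0 <= N * N * (q - 1) by rewrite !mulr_ge0 ?subr_ge0 //; lra.
have : 0 <= N * q * (N - 1) by rewrite !mulr_ge0 ?subr_ge0 //; lra.
nra.
Qed.
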